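(* Assume (A), (R), (S), let $c^{\mathrm{in}}\in\ell^1_1$, and for $N\in\mathbb N$ let $c^N$ be the unique nonnegative $C^1$ solution of the truncated system (T$_N$) with initial data $c^N_k(0)=c^{\mathrm{in}}_k$ for $k\le N$. Then for every $T>0$ and $k\in\mathbb N$ there is a constant $\mathscr C$, depending on $T$ and $k$ (and the data) but not on $N$, such that $$\Bigl\|\frac{d}{dt}c^N_k\Bigr\|_{L^1(0,T)}\le\mathscr C\quad\text{for all }N\ge k.$$
   Context: Standing assumptions on the coefficients ($\mathbb N=\{1,2,\dots\}$): (A) $a_{k,\ell}=a_{\ell,k}$ and $0\le a_{k,\ell}\le A_*(k^\alpha\ell^\beta+k^\beta\ell^\alpha)$ for all $k,\ell\in\mathbb N$, with constants $A_*>0$, $\alpha,\beta\in[0,1]$, $\alpha\le\beta$; (R) $r_k\ge R_*k^\gamma$ for all $k\in\mathbb N$, with $R_*>0$ and $\gamma>\max\{0,\alpha+\beta-1\}$; (S) $s_k\ge 0$ for all $k$, and for every $\mu\ge0$ there is $\mathfrak s_\mu>0$ with $\sum_{k\ge1}k^\mu s_k\le\mathfrak s_\mu$. $\ell^1_1$ is the set of sequences $(c_k)_{k\in\mathbb N}$ with $c_k\ge0$ and $\sum_k kc_k<\infty$. Truncated system (T$_N$): $\frac{d}{dt}c_k^N=\frac12\sum_{\ell=1}^{k-1}a_{k-\ell,\ell}c^N_{k-\ell}c^N_\ell-c^N_k\sum_{\ell=1}^{N-k}a_{k,\ell}c^N_\ell+s_k-r_kc^N_k$ for $k\le N$, and $c^N_k\equiv0$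 for $k>N$. *)

From Stdlib Require Import Reals Lra Lia.
Open Scope R_scope.

Fixpoint sum_upto (n : nat) (f : nat -> R) : R :=
  match n with
  | O => 0
  | S n' => sum_upto n' f + f (S n')
  end.

Definition npow (k : nat) (x : R) : R := Rpower (INR k) x.

Definition hyp_A (a : nat -> nat -> R) (Astar alpha beta : R) : Prop :=
  0 < Astar /\ 0 <= alpha /\ alpha <= beta /\ beta <= 1 /\
  forall k l : nat, (1 <= k)%nat -> (1 <= l)%nat ->
    a k l = a l k /\ 0 <= a k l /\
    a k l <= Astar * (npow k alpha * npow l beta + npow k beta * npow l alpha).

Definition hyp_R (r : nat -> R) (Rstar gamma alpha beta : R) : Prop :=
  0 < Rstar /\ Rmax 0 (alpha + beta - 1) < gamma /\
  forall k : nat, (1 <= k)%nat -> Rstar * npow k gamma <= r k.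

Definition hyp_S (s : nat -> R) : Prop :=
  (forall k : nat, (1 <= k)%nat -> 0 <= s k) /\
  forall mu : R, 0 <= mu -> exists smu : R, 0 < smu /\
    forall n : nat, sum_upto n (fun k => npow k mu * s k) <= smu.

Definition in_l11 (c : nat -> R) : Prop :=
  (forall k : nat, (1 <= k)%nat -> 0 <= c k) /\
  exists M : R, forall n : nat, sum_upto n (fun k => INR k * c k) <= M.

Definition truncated_rhs (a : nat -> nat -> R) (s r : nat -> R) (N : nat)
    (cN : nat -> R -> R) (k : nat) (t : R) : R :=
  / 2 * sum_upto (k - 1) (fun l => a (k - l)%nat l * cN (k - l)%nat t * cN l t)
  - cN k t * sum_upto (N - k) (fun l => a k l * cN l t)
  + s k - r k * cN k t.

(* cN is a nonnegative C^1 solution of (T_N) on [0, infinity) with initial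
   data cin: for 1 <= k <= N, cN k is continuous from the right at 0,
   differentiable on (0,inf) with derivative given by (T_N) (the right-hand
   side being continuous, the solution is C^1 on [0,inf)), nonnegative on
   [0,inf), cN k 0 = cin k; and cN k = 0 for k > N. *)
Definition truncated_solution (a : nat -> nat -> R) (s r cin : nat -> R)
    (N : nat) (cN : nat -> R -> R) : Prop :=
  (forall k : nat, (1 <= k)%nat -> (k <= N)%nat ->
     cN k 0 = cin k /\
     (forall t, 0 <= t -> 0 <= cN k t) /\
     (forall eps, 0 < eps -> exists delta, 0 < delta /\
        forall t, 0 <= t < delta -> Rabs (cN k t - cN k 0) < eps) /\
     (forall t, 0 < t -> derivable_pt_lim (cN k) t (truncated_rhs a s r N cN k t))) /\
  (forall k : nat, (N < k)%nat -> forall t, cN k t = 0).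

(** The gain term of (T_N) for the size [k] involves only the sizes below [k]
    and is nonnegative, while the loss terms are nonpositive; hence
    [d/dt c_k^N <= G_k], where [G_k] depends only on bounds for
    [c_1^N, ..., c_(k-1)^N].  Integrating this one-sided bound gives, by
    induction on [k], bounds for [c_k^N] on [[0, T]] that are uniform in [N].
    Finally [|x| <= 2 G - x] whenever [x <= G] and [0 <= G], so the
    L^1 norm of [d/dt c_k^N] on [[0, T]] is at most [2 G_k T] plus the
    uniform bound on [c_k^N]. *)

From Stdlib Require Import Reals Lra Lia Arith.
From Coquelicot Require Import Coquelicot.
Open Scope R_scope.

Lemma sum_upto_le n f g : (forall l, (1 <= l <= n)%nat -> f l <= g l) ->
  sum_upto n f <= sum_upto n g.
Proof.
  induction n as [|n IH]; intros H; simpl; [lra|].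
  apply Rplus_le_compat; [apply IH; intros; apply H|apply H]; lia.
Qed.

Lemma sum_upto_nonneg n f : (forall l, (1 <= l <= n)%nat -> 0 <= f l) ->
  0 <= sum_upto n f.
Proof.
  induction n as [|n IH]; intros H; simpl; [lra|].
  apply Rplus_le_le_0_compat; [apply IH; intros; apply H|apply H]; lia.
Qed.

Lemma sum_upto_continuity_pt n (F : nat -> R -> R) x :
  (forall l, (1 <= l <= n)%nat -> continuity_pt (F l) x) ->
  continuity_pt (fun t => sum_upto n (fun l => F l t)) x.
Proof.
  induction n as [|n IH]; intros H; simpl.
  - apply continuity_pt_const; intros ? ?; reflexivity.
  - apply continuity_pt_plus; [apply IH; intros; apply H|apply H]; lia.
Qed.

Lemma truncated_rhs_continuity_pt a s r N (d : nat -> R -> R) k x :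
  (1 <= k)%nat -> (forall l, (1 <= l)%nat -> continuity_pt (d l) x) ->
  continuity_pt (truncated_rhs a s r N d k) x.
Proof.
  intros Hk Hd. unfold truncated_rhs.
  assert (Hcst : forall v : R, continuity_pt (fun _ => v) x)
    by (intros v; apply continuity_pt_const; intros ? ?; reflexivity).
  repeat first [ apply continuity_pt_minus | apply continuity_pt_plus
               | apply continuity_pt_mult | apply sum_upto_continuity_pt; intros l Hl
               | apply Hcst | apply Hd; lia ].
Qed.

Lemma increment_le_of_derive_le (f f' : R -> R) G u v : u <= v ->
  (forall x, u < x < v -> derivable_pt_lim f x (f' x)) ->
  (forall x, u <= x <= v -> continuity_pt f x) ->
  (forall x, u <= x <= v -> f' x <= G) ->
  f v <= f u + G * (v - u).
Proof.
  intros Huv Hd Hc Hle.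
  destruct (MVT_gen f u v f') as [xi [Hxi Heq]];
    rewrite Rmin_left, Rmax_right in * by lra.
  - intros x Hx. apply is_derive_Reals, Hd, Hx.
  - exact Hc.
  - assert (f' xi * (v - u) <= G * (v - u))
      by (apply Rmult_le_compat_r; [lra|apply Hle; lra]).
    lra.
Qed.

Lemma ex_RInt_continuity_pt (h : R -> R) u v :
  (forall x, Rmin u v <= x <= Rmax u v -> continuity_pt h x) -> ex_RInt h u v.
Proof.
  intros Hc. apply (ex_RInt_continuous (V := R_CompleteNormedModule)).
  intros x Hx. apply continuity_pt_filterlim, Hc, Hx.
Qed.

Lemma RInt_abs_le_of_derive_le (f f' : R -> R) G u v : u <= v -> 0 <= G ->
  (forall x, u <= x <= v -> derivable_pt_lim f x (f' x)) ->
  (forall x, u <= x <= v -> continuity_pt f' x) ->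
  (forall x, u <= x <= v -> f' x <= G) ->
  RInt (fun x => Rabs (f' x)) u v <= 2 * G * (v - u) + f u - f v.
Proof.
  intros Huv HG Hd Hc Hle.
  assert (Hc' : forall x, Rmin u v <= x <= Rmax u v -> continuity_pt f' x)
    by (rewrite Rmin_left, Rmax_right by lra; exact Hc).
  assert (Hf' : ex_RInt f' u v) by (apply ex_RInt_continuity_pt, Hc').
  assert (Hftc : RInt f' u v = f v - f u).
  { apply is_RInt_unique, (is_RInt_derive (V := R_CompleteNormedModule)).
    - rewrite Rmin_left, Rmax_right by lra.
      intros x Hx. apply is_derive_Reals, Hd, Hx.
    - intros x Hx. apply continuity_pt_filterlim, Hc', Hx. }
  assert (Hcst : ex_RInt (fun _ => 2 * G) u v)
    by apply (ex_RInt_const (V := R_NormedModule)).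
  apply Rle_trans with (RInt (fun x => 2 * G - f' x) u v).
  - apply RInt_le; [lra| | |].
    + apply ex_RInt_continuity_pt. intros x Hx.
      apply (continuity_pt_comp f' Rabs); [apply Hc', Hx|apply Rcontinuity_abs].
    + apply (ex_RInt_minus (V := R_NormedModule)); assumption.
    + intros x Hx.
      assert (f' x <= G) by (apply Hle; lra).
      unfold Rabs; destruct Rcase_abs; lra.
  - rewrite (RInt_minus (V := R_CompleteNormedModule)), RInt_const, Hftc
      by assumption.
    change (minus (scal (v - u) (2 * G)) (f v - f u))
      with ((v - u) * (2 * G) - (f v - f u)).
    lra.
Qed.

(* The contribution of [[0, eps]] vanishes as [eps -> 0] since [h] is bounded. *)
Lemma RInt_le_of_tails_le (h : R -> R) T M : 0 < T ->
  (forall x, 0 <= x <= T -> continuity_pt h x) ->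
  (forall eps, 0 < eps < T -> RInt h eps T <= M) ->
  RInt h 0 T <= M.
Proof.
  intros HT Hc Htail.
  assert (Hex : forall u v, 0 <= u <= v -> v <= T -> ex_RInt h u v).
  { intros u v Huv HvT. apply ex_RInt_continuity_pt.
    rewrite Rmin_left, Rmax_right by lra. intros x Hx. apply Hc. lra. }
  assert (Habs : forall x, 0 <= x <= T -> continuity_pt (fun y => Rabs (h y)) x)
    by (intros x Hx; apply (continuity_pt_comp h Rabs);
        [apply Hc, Hx|apply Rcontinuity_abs]).
  destruct (continuity_ab_maj _ 0 T (Rlt_le _ _ HT) Habs) as [xm [Hmax _]].
  set (K := Rabs (h xm)).
  assert (HK : 0 <= K) by apply Rabs_pos.
  apply Rle_plus_epsilon. intros delta Hdelta.
  set (eps := Rmin (T / 2) (delta / (K + 1))).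
  assert (Heps : 0 < eps) by (apply Rmin_pos; [lra|apply Rdiv_lt_0_compat; lra]).
  assert (HepsT : eps <= T / 2) by apply Rmin_l.
  assert (HepsK : eps * K <= delta).
  { assert (eps * (K + 1) <= delta).
    { apply Rle_trans with (delta / (K + 1) * (K + 1)).
      - apply Rmult_le_compat_r; [lra|apply Rmin_r].
      - right. field. lra. }
    nra. }
  assert (Hhead : Rabs (RInt h 0 eps) <= (eps - 0) * K).
  { apply abs_RInt_le_const; [lra|apply Hex; lra|].
    intros x Hx. apply Hmax. lra. }
  rewrite <- (RInt_Chasles h 0 eps T) by (apply Hex; lra).
  assert (RInt h eps T <= M) by (apply Htail; lra).
  change (plus (RInt h 0 eps) (RInt h eps T)) with (RInt h 0 eps + RInt h eps T).
  apply Rabs_le_between in Hhead. lra.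
Qed.

Lemma Riemann_integrable_ext_le (g h : R -> R) T M : 0 <= T ->
  (forall x, 0 <= x <= T -> continuity_pt h x) ->
  (forall x, 0 <= x <= T -> g x = h x) ->
  RInt h 0 T <= M ->
  exists pr : Riemann_integrable g 0 T, RiemannInt pr <= M.
Proof.
  intros HT Hc Hgh HM.
  assert (Hext : forall x, Rmin 0 T < x < Rmax 0 T -> h x = g x).
  { rewrite Rmin_left, Rmax_right by lra. intros x Hx. symmetry. apply Hgh. lra. }
  assert (Hex : ex_RInt g 0 T).
  { apply ex_RInt_ext with h; [exact Hext|].
    apply ex_RInt_continuity_pt. rewrite Rmin_left, Rmax_right by lra. exact Hc. }
  exists (ex_RInt_Reals_0 _ _ _ Hex).
  rewrite <- RInt_Reals, <- (RInt_ext _ _ _ _ Hext). exact HM.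
Qed.

(* Extends a function given on [[0, oo)] to all of [R] by its value at [0], so that
   one-sided continuity at [0] becomes continuity. *)
Definition clamp0 (f : R -> R) (t : R) : R := f (Rmax 0 t).

Lemma clamp0_id f t : 0 <= t -> clamp0 f t = f t.
Proof. intros Ht. unfold clamp0. rewrite Rmax_right by exact Ht. reflexivity. Qed.

Lemma clamp0_locally_id f x : 0 < x -> locally x (fun t => f t = clamp0 f t).
Proof.
  intros Hx. exists (mkposreal x Hx). intros t Ht.
  change (Rabs (t - x) < x) in Ht. apply Rabs_def2 in Ht.
  symmetry. apply clamp0_id. lra.
Qed.

Lemma continuity_pt_clamp0 (f : R -> R) x :
  (forall eps, 0 < eps -> exists delta, 0 < delta /\
     forall t, 0 <= t < delta -> Rabs (f t - f 0) < eps) ->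
  (forall t, 0 < t -> continuity_pt f t) ->
  continuity_pt (clamp0 f) x.
Proof.
  intros Hright Hpos. destruct (Rle_lt_dec x 0) as [Hx|Hx].
  - intros eps Heps. destruct (Hright eps Heps) as [delta [Hdelta Hb]].
    exists delta. split; [exact Hdelta|]. intros t [_ Ht].
    simpl in *. unfold R_dist, clamp0 in *.
    rewrite (Rmax_left 0 x Hx). apply Rabs_def2 in Ht.
    apply Hb. split; [apply Rmax_l|]. apply Rmax_lub_lt; lra.
  - apply continuity_pt_filterlim. change (continuous (clamp0 f) x).
    apply (continuous_ext_loc _ f); [apply clamp0_locally_id, Hx|].
    apply continuity_pt_filterlim, Hpos, Hx.
Qed.

Lemma derivable_pt_lim_clamp0 (f : R -> R) x l : 0 < x ->
  derivable_pt_lim f x l -> derivable_pt_lim (clamp0 f) x l.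
Proof.
  intros Hx Hd. apply is_derive_Reals.
  apply (is_derive_ext_loc f); [apply clamp0_locally_id, Hx|].
  apply is_derive_Reals, Hd.
Qed.

Definition gain (a : nat -> nat -> R) (s : nat -> R) (d : nat -> R -> R)
    (k : nat) (t : R) : R :=
  / 2 * sum_upto (k - 1) (fun l => a (k - l)%nat l * d (k - l)%nat t * d l t) + s k.

Section Gain.
Variables (a : nat -> nat -> R) (s r : nat -> R).
Hypothesis a_nonneg : forall k l, (1 <= k)%nat -> (1 <= l)%nat -> 0 <= a k l.

Lemma gain_le (d d' : nat -> R -> R) k t t' :
  (forall l, (1 <= l < k)%nat -> 0 <= d l t <= d' l t') ->
  gain a s d k t <= gain a s d' k t'.
Proof.
  intros Hdd. unfold gain. apply Rplus_le_compat_r, Rmult_le_compat_l; [lra|].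
  apply sum_upto_le. intros l Hl.
  assert (0 <= a (k - l)%nat l) by (apply a_nonneg; lia).
  destruct (Hdd (k - l)%nat ltac:(lia)), (Hdd l ltac:(lia)).
  apply Rmult_le_compat; [nra|lra|nra|lra].
Qed.

Lemma gain_nonneg (d : nat -> R -> R) k t : 0 <= s k ->
  (forall l, (1 <= l < k)%nat -> 0 <= d l t) -> 0 <= gain a s d k t.
Proof.
  intros Hs Hd. unfold gain. apply Rplus_le_le_0_compat; [|exact Hs].
  apply Rmult_le_pos; [lra|]. apply sum_upto_nonneg. intros l Hl.
  assert (0 <= a (k - l)%nat l) by (apply a_nonneg; lia).
  assert (0 <= d (k - l)%nat t) by (apply Hd; lia).
  assert (0 <= d l t) by (apply Hd; lia).
  apply Rmult_le_pos; [apply Rmult_le_pos|]; assumption.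
Qed.

Lemma truncated_rhs_le_gain N (d : nat -> R -> R) k t : (1 <= k)%nat -> 0 <= r k ->
  (forall l, (1 <= l)%nat -> 0 <= d l t) ->
  truncated_rhs a s r N d k t <= gain a s d k t.
Proof.
  intros Hk Hr Hd. unfold truncated_rhs, gain.
  assert (0 <= sum_upto (N - k) (fun l => a k l * d l t)).
  { apply sum_upto_nonneg. intros l Hl.
    apply Rmult_le_pos; [apply a_nonneg|apply Hd]; lia. }
  assert (0 <= d k t) by (apply Hd, Hk).
  assert (0 <= d k t * sum_upto (N - k) (fun l => a k l * d l t)) by nra.
  assert (0 <= r k * d k t) by nra.
  lra.
Qed.

End Gain.

Section TruncatedSolution.
Variables (a : nat -> nat -> R) (s r cin : nat -> R) (N : nat) (cN : nat -> R -> R).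
Hypothesis a_nonneg : forall k l, (1 <= k)%nat -> (1 <= l)%nat -> 0 <= a k l.
Hypothesis r_nonneg : forall k, (1 <= k)%nat -> 0 <= r k.
Hypothesis s_nonneg : forall k, (1 <= k)%nat -> 0 <= s k.
Hypothesis hsol : truncated_solution a s r cin N cN.

Lemma truncated_solution_nonneg l t : (1 <= l)%nat -> 0 <= t -> 0 <= cN l t.
Proof.
  intros Hl Ht. destruct hsol as [Hin Hout].
  destruct (le_lt_dec l N) as [HlN|HlN].
  - apply (Hin l Hl HlN), Ht.
  - rewrite (Hout l HlN). lra.
Qed.

Lemma continuity_pt_clamp0_solution l x : (1 <= l)%nat ->
  continuity_pt (clamp0 (cN l)) x.
Proof.
  intros Hl. destruct hsol as [Hin Hout].
  destruct (le_lt_dec l N) as [HlN|HlN].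
  - destruct (Hin l Hl HlN) as [_ [_ [Hright Hd]]].
    apply continuity_pt_clamp0; [exact Hright|].
    intros t Ht. exact (derivable_continuous_pt _ _ (exist _ _ (Hd t Ht))).
  - apply continuity_pt_const. intros u v.
    unfold clamp0. rewrite !(Hout l HlN). reflexivity.
Qed.

Lemma continuity_pt_truncated_rhs_clamp0 k x : (1 <= k)%nat ->
  continuity_pt (truncated_rhs a s r N (fun l => clamp0 (cN l)) k) x.
Proof.
  intros Hk. apply truncated_rhs_continuity_pt; [exact Hk|].
  intros l Hl. apply continuity_pt_clamp0_solution, Hl.
Qed.

Lemma truncated_rhs_clamp0 k t : 0 <= t ->
  truncated_rhs a s r N (fun l => clamp0 (cN l)) k t = truncated_rhs a s r N cN k t.
Proof.
  intros Ht. unfold truncated_rhs, clamp0. rewrite Rmax_right by exact Ht. reflexivity.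
Qed.

Lemma derivable_pt_lim_clamp0_solution k x : (1 <= k <= N)%nat -> 0 < x ->
  derivable_pt_lim (clamp0 (cN k)) x (truncated_rhs a s r N (fun l => clamp0 (cN l)) k x).
Proof.
  intros Hk Hx. rewrite truncated_rhs_clamp0 by lra.
  apply derivable_pt_lim_clamp0; [exact Hx|].
  destruct hsol as [Hin _]. apply (Hin k ltac:(lia) ltac:(lia)), Hx.
Qed.

Lemma truncated_rhs_clamp0_le_gain k B x : (1 <= k)%nat -> 0 <= x ->
  (forall l, (1 <= l < k)%nat -> cN l x <= B) ->
  truncated_rhs a s r N (fun l => clamp0 (cN l)) k x <= gain a s (fun _ _ => B) k 0.
Proof.
  intros Hk Hx HB. rewrite truncated_rhs_clamp0 by exact Hx.
  apply Rle_trans with (gain a s cN k x).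
  - apply truncated_rhs_le_gain; [exact a_nonneg|exact Hk|apply r_nonneg, Hk|].
    intros l Hl. apply truncated_solution_nonneg; assumption.
  - apply gain_le; [exact a_nonneg|]. intros l Hl. split; [|apply HB, Hl].
    apply truncated_solution_nonneg; [lia|exact Hx].
Qed.

Lemma truncated_solution_le_of_lower_bounds k B t : (1 <= k <= N)%nat -> 0 <= t ->
  (forall l x, (1 <= l < k)%nat -> 0 <= x <= t -> cN l x <= B) ->
  cN k t <= cin k + gain a s (fun _ _ => B) k 0 * t.
Proof.
  intros Hk Ht HB.
  assert (Hf := increment_le_of_derive_le (clamp0 (cN k))
    (truncated_rhs a s r N (fun l => clamp0 (cN l)) k) (gain a s (fun _ _ => B) k 0)
    0 t Ht).
  rewrite !clamp0_id, Rminus_0_r in Hf by lra.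
  destruct hsol as [Hin _]. rewrite (proj1 (Hin k ltac:(lia) ltac:(lia))) in Hf.
  apply Hf.
  - intros x Hx. apply derivable_pt_lim_clamp0_solution; [exact Hk|lra].
  - intros x _. apply continuity_pt_clamp0_solution. lia.
  - intros x Hx. apply truncated_rhs_clamp0_le_gain; [lia|lra|].
    intros l Hl. apply HB; [exact Hl|exact Hx].
Qed.

Lemma RInt_abs_truncated_rhs_clamp0_le k B T : (1 <= k <= N)%nat -> 0 < T -> 0 <= B ->
  (forall l x, (1 <= l <= k)%nat -> 0 <= x <= T -> cN l x <= B) ->
  RInt (fun t => Rabs (truncated_rhs a s r N (fun l => clamp0 (cN l)) k t)) 0 T
    <= 2 * gain a s (fun _ _ => B) k 0 * T + B.
Proof.
  intros Hk HT HB0 HB.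
  set (G := gain a s (fun _ _ => B) k 0).
  assert (HG : 0 <= G)
    by (apply gain_nonneg; [exact a_nonneg|apply s_nonneg; lia|intros; exact HB0]).
  set (rhs := truncated_rhs a s r N (fun l => clamp0 (cN l)) k).
  assert (Hrhs : forall x, continuity_pt rhs x)
    by (intros x; apply continuity_pt_truncated_rhs_clamp0; lia).
  apply RInt_le_of_tails_le; [exact HT| |].
  { intros x _. apply (continuity_pt_comp rhs Rabs); [apply Hrhs|apply Rcontinuity_abs]. }
  intros eps Heps.
  apply Rle_trans with (2 * G * (T - eps) + clamp0 (cN k) eps - clamp0 (cN k) T).
  - apply RInt_abs_le_of_derive_le; [lra|exact HG| |intros; apply Hrhs|].
    + intros x Hx. apply derivable_pt_lim_clamp0_solution; lia || lra.
    + intros x Hx. apply truncated_rhs_clamp0_le_gain; [lia|lra|].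
      intros l Hl. apply HB; lia || lra.
  - rewrite !clamp0_id by lra.
    assert (0 <= cN k T) by (apply truncated_solution_nonneg; lia || lra).
    assert (cN k eps <= B) by (apply HB; lia || lra).
    nra.
Qed.

End TruncatedSolution.

Lemma truncated_solutions_bounded a s r cin (c : nat -> nat -> R -> R) T :
  (forall k l, (1 <= k)%nat -> (1 <= l)%nat -> 0 <= a k l) ->
  (forall k, (1 <= k)%nat -> 0 <= r k) ->
  (forall k, (1 <= k)%nat -> 0 <= s k) ->
  (forall N, (1 <= N)%nat -> truncated_solution a s r cin N (c N)) ->
  0 <= T ->
  forall n, exists B, 0 <= B /\ forall N j t, (1 <= N)%nat -> (1 <= j <= n)%nat ->
    0 <= t <= T -> c N j t <= B.
Proof.
  intros Ha Hr Hs hc HT n. induction n as [|n [B [HB0 HB]]].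
  - exists 0. split; [lra|]. intros; lia.
  - set (G := gain a s (fun _ _ => B) (S n) 0).
    assert (HG : 0 <= G) by (apply gain_nonneg; [exact Ha|apply Hs; lia|intros; exact HB0]).
    exists (Rmax B (cin (S n) + G * T)).
    split; [apply Rle_trans with B; [lra|apply Rmax_l]|].
    intros N j t HN Hj Ht.
    destruct (Nat.eq_dec j (S n)) as [->|Hjn].
    2: { apply Rle_trans with B; [apply HB; auto; lia|apply Rmax_l]. }
    destruct (le_lt_dec (S n) N) as [HnN|HnN].
    2: { rewrite (proj2 (hc N HN) _ HnN). apply Rle_trans with B; [lra|apply Rmax_l]. }
    apply Rle_trans with (cin (S n) + G * T); [|apply Rmax_r].
    apply Rle_trans with (cin (S n) + G * t).
    + apply (truncated_solution_le_of_lower_bounds a s r cin N (c N) Ha Hr (hc N HN));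
        [lia|lra|].
      intros l x Hl Hx. apply HB; [exact HN|lia|lra].
    + apply Rplus_le_compat_l, Rmult_le_compat_l; lra.
Qed.

Lemma hyp_A_nonneg a Astar alpha beta : hyp_A a Astar alpha beta ->
  forall k l, (1 <= k)%nat -> (1 <= l)%nat -> 0 <= a k l.
Proof. intros (_ & _ & _ & _ & HA) k l Hk Hl. apply (HA k l Hk Hl). Qed.

Lemma hyp_R_nonneg r Rstar gamma alpha beta : hyp_R r Rstar gamma alpha beta ->
  forall k, (1 <= k)%nat -> 0 <= r k.
Proof.
  intros (HR0 & _ & HR) k Hk. apply Rle_trans with (2 := HR k Hk).
  apply Rmult_le_pos; [lra|apply Rlt_le, exp_pos].
Qed.

Theorem mainTheorem10
  (a : nat -> nat -> R) (r s cin : nat -> R)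
  (Astar alpha beta Rstar gamma : R)
  (c : nat -> nat -> R -> R)
  (hA : hyp_A a Astar alpha beta)
  (hR : hyp_R r Rstar gamma alpha beta)
  (hS : hyp_S s)
  (hcin : in_l11 cin)
  (hc : forall N : nat, (1 <= N)%nat -> truncated_solution a s r cin N (c N)) :
  forall (T : R) (k : nat), 0 < T -> (1 <= k)%nat ->
  exists C : R, forall N : nat, (k <= N)%nat ->
    exists pr : Riemann_integrable
                  (fun t => Rabs (truncated_rhs a s r N (c N) k t)) 0 T,
      RiemannInt pr <= C.
Proof.
  intros T k HT Hk.
  destruct hS as [Hs _].
  assert (Ha := hyp_A_nonneg _ _ _ _ hA).
  assert (Hr := hyp_R_nonneg _ _ _ _ _ hR).
  destruct (truncated_solutions_bounded a s r cin c T Ha Hr Hs hc (Rlt_le _ _ HT) k)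
    as [B [HB0 HB]].
  exists (2 * gain a s (fun _ _ => B) k 0 * T + B). intros N HkN.
  assert (hsol := hc N ltac:(lia)).
  apply Riemann_integrable_ext_le
    with (h := fun t => Rabs (truncated_rhs a s r N (fun l => clamp0 (c N l)) k t)).
  - lra.
  - intros x _. apply (continuity_pt_comp _ Rabs); [|apply Rcontinuity_abs].
    apply (continuity_pt_truncated_rhs_clamp0 a s r cin N (c N) hsol), Hk.
  - intros x Hx. rewrite truncated_rhs_clamp0 by lra. reflexivity.
  - apply (RInt_abs_truncated_rhs_clamp0_le a s r cin N (c N) Ha Hr Hs hsol);
      [lia|lra|lra|].
    intros l x Hl Hx. apply HB; lia || lra.
Qed.
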